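(* Let $X$ be a shift space. For every $n\ge1$ and $m\ge0$, the graph $\mathcal E_n(w)$ is a tree for all $w\in\mathcal L_{\ge m}(X)$ if and only if the graph $\mathcal E_{n+1}(w)$ is a tree for all $w\in\mathcal L_{\ge m}(X)$.
   Context: $A$ is a finite alphabet; a shift space is a closed shift-invariant subset $X\subseteq A^{\mathbb Z}$; $\mathcal L(X)$ is its set of finite factors, $\mathcal L_n(X)=\mathcal L(X)\cap A^n$, $\mathcal L_{\ge n}(X)=\bigcup_{k\ge n}\mathcal L_k(X)$. For $w\in\mathcal L(X)$ and $n\ge1$: $L_n(w)=\{u\in\mathcal L_n(X):uw\in\mathcal L(X)\}$, $R_n(w)=\{v\in\mathcal L_n(X):wv\in\mathcal L(X)\}$, and the extension graph $\mathcal E_n(w)$ is the undirected bipartite graph with vertex set the disjoint union of $L_n(w)$ and $R_n(w)$ and an edge $(u,v)$ iff $uwv\in\mathcal L(X)$. *)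

From mathcomp Require Import all_boot all_order all_algebra.
Set Implicit Arguments. Unset Strict Implicit. Unset Printing Implicit Defensive.
Import GRing.Theory Num.Theory.

Definition config (A : finType) := int -> A.

Definition shift (A : finType) (x : config A) : config A := fun i => x (i + 1)%R.

Definition factor_at (A : finType) (x : config A) (i : int) (k : nat) : seq A :=
  [seq x (i + (j%:Z))%R | j <- iota 0 k].

(* X is closed in the product topology: a configuration all of whose central
   windows [-N,N] agree with some point of X belongs to X. *)
Definition closed_set (A : finType) (X : config A -> Prop) : Prop :=
  forall x : config A,
    (forall N : nat, exists y, X y /\
       forall i : int, (- (N%:Z) <= i)%R -> (i <= N%:Z)%R -> y i = x i) ->
    X x.

Definition shift_invariant (A : finType) (X : config A -> Prop) : Prop :=
  forall x : config A, X x <-> X (shift x).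

Definition shift_space (A : finType) (X : config A -> Prop) : Prop :=
  closed_set X /\ shift_invariant X.

Definition lang (A : finType) (X : config A -> Prop) (w : seq A) : Prop :=
  exists x, X x /\ exists i : int, w = factor_at x i (size w).

Definition Lext (A : finType) (X : config A -> Prop) (n : nat) (w u : seq A) : Prop :=
  size u = n /\ lang X u /\ lang X (u ++ w).
Definition Rext (A : finType) (X : config A -> Prop) (n : nat) (w v : seq A) : Prop :=
  size v = n /\ lang X v /\ lang X (w ++ v).

(* Extension graph E_n(w): vertices are the disjoint union (inl u | u in L_n(w))
   and (inr v | v in R_n(w)); undirected edges {u,v} iff uwv in L(X). *)
Definition ext_vertex (A : finType) (X : config A -> Prop) (n : nat) (w : seq A)
  (z : seq A + seq A) : Prop :=
  match z with inl u => Lext X n w u | inr v => Rext X n w v end.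

Definition ext_edge (A : finType) (X : config A -> Prop) (n : nat) (w : seq A)
  (z1 z2 : seq A + seq A) : Prop :=
  match z1, z2 with
  | inl u, inr v => Lext X n w u /\ Rext X n w v /\ lang X (u ++ w ++ v)
  | inr v, inl u => Lext X n w u /\ Rext X n w v /\ lang X (u ++ w ++ v)
  | _, _ => False
  end.

Fixpoint walk (V : Type) (E : V -> V -> Prop) (x : V) (p : seq V) : Prop :=
  match p with
  | [::] => True
  | y :: p' => E x y /\ walk E y p'
  end.

Definition connected_graph (V : eqType) (P : V -> Prop) (E : V -> V -> Prop) : Prop :=
  forall x y, P x -> P y ->
    exists p : seq V, walk E x p /\ last x p = y /\ (forall z, z \in p -> P z).

Definition acyclic_graph (V : eqType) (P : V -> Prop) (E : V -> V -> Prop) : Prop :=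
  ~ exists (x : V) (p : seq V),
      P x /\ (forall z, z \in p -> P z) /\ uniq (x :: p) /\ 2 <= size p /\
          walk E x p /\ E (last x p) x.

Definition is_tree (V : eqType) (P : V -> Prop) (E : V -> V -> Prop) : Prop :=
  (exists x, P x) /\ connected_graph P E /\ acyclic_graph P E.

Definition ext_graph_is_tree (A : finType) (X : config A -> Prop) (n : nat) (w : seq A) : Prop :=
  @is_tree (seq A + seq A)%type (ext_vertex X n w) (ext_edge X n w).

(* Write E_{k,l}(w) for the extension graph of w with left extensions of
   length k and right extensions of length l.  Grouping the right vertices of
   E_{k,l+1}(w) by their prefix of length l shows that E_{k,l+1}(w) arises from
   E_{k,l}(w) by blowing up every right vertex v into a copy of E_{k,1}(wv),
   glued along the left neighbours of v.  For such a blow-up of bipartite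
   graphs, the glued graph is a tree when the base and all the pieces are trees,
   and the base is a tree when the glued graph is a tree and all the pieces are
   connected.  Since wv is longer than w, the bound |w| >= m is inherited by the
   pieces; so "all E_{k,l}(w) with w in L_{>=m}(X) are trees" passes from (k,l)
   and (k,1) up to (k,l+1), and from (k,l+1) down to (k,l).  Mirroring X swaps
   the two sides, and both E_{n,n} and E_{n+1,n+1} are thus equivalent to
   E_{1,1}. *)

From mathcomp Require Import all_boot all_order all_algebra.
From mathcomp Require Import zify.
From Stdlib Require Import ClassicalEpsilon FunctionalExtensionality.
Set Implicit Arguments. Unset Strict Implicit. Unset Printing Implicit Defensive.
Import GRing.Theory.

Section Walks.
Variable V : eqType.
Implicit Types (P : V -> Prop) (E : V -> V -> Prop).

(* Relations are reflected into [rel V] (classically) so that [path] and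
   [shortenP] apply to walks. *)
Definition relb E : rel V :=
  fun x y => if excluded_middle_informative (E x y) then true else false.

Lemma relbP E x y : reflect (E x y) (relb E x y).
Proof. rewrite /relb; case: excluded_middle_informative => h; by constructor. Qed.

Lemma walk_path E x p : walk E x p <-> path (relb E) x p.
Proof.
elim: p x => [|y p IH] x //=; split.
  by case=> h1 /IH h2; rewrite h2 andbT; apply/relbP.
by case/andP=> /relbP h1 /IH; tauto.
Qed.

(* The start vertex [x] itself is not required to satisfy [P]. *)
Definition conn P E x y :=
  exists p, path (relb E) x p /\ last x p = y /\ (forall z, z \in p -> P z).

Definition connected P E := forall x y, P x -> P y -> conn P E x y.

Lemma connected_graphE P E : connected_graph P E <-> connected P E.
Proof.
split=> h x y Px Py; have [p [h1 [h2 h3]]] := h x y Px Py; exists p.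
  by split=> //; apply/walk_path.
by split=> //; apply/walk_path.
Qed.

Lemma conn_refl P E x : conn P E x x.
Proof. by exists [::]. Qed.

Lemma conn_edge P E x y : E x y -> P y -> conn P E x y.
Proof.
move=> Exy Py; exists [:: y]; split; first by rewrite /= andbT; apply/relbP.
by split=> // z; rewrite inE => /eqP->.
Qed.

Lemma conn_trans P E x y z : conn P E x y -> conn P E y z -> conn P E x z.
Proof.
move=> [p [h1 [h2 h3]]] [q [g1 [g2 g3]]]; exists (p ++ q); split.
  by rewrite cat_path h1 h2 g1.
by split; [rewrite last_cat h2 | move=> t; rewrite mem_cat => /orP[/h3|/g3]].
Qed.

Lemma conn_ind P E (Q : V -> Prop) x y : conn P E x y ->
  Q y -> (forall a b, E a b -> P b -> Q b -> Q a) -> Q x.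
Proof.
move=> [p [h1 [h2 h3]]] Qy hQ; elim: p x h1 h2 h3 => [|t p IH] x /=.
  by move=> _ ->.
move=> /andP[/relbP Ext h1] h2 h3.
apply: (hQ x t Ext); first by apply: h3; rewrite inE eqxx.
by apply: IH => // z zp; apply: h3; rewrite inE zp orbT.
Qed.

Lemma conn_uniq P E x y : conn P E x y ->
  exists p, [/\ path (relb E) x p, last x p = y, forall z, z \in p -> P z
            & uniq (x :: p)].
Proof.
case=> p [h1 [h2 h3]]; case: (shortenP h1) h2 => q g1 g2 g3 g4.
by exists q; split=> // z /g3; apply: h3.
Qed.

Lemma conn_endP P E x y : x <> y -> conn P E x y -> P y.
Proof.
move=> xy [[|t p] [_ [/= yE Pp]]]; first by case: xy.
by rewrite -yE; apply: Pp; rewrite mem_last.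
Qed.

Lemma conn_sym P E x y : (forall a b, E a b -> E b a) ->
  P x -> conn P E x y -> conn P E y x.
Proof.
move=> sym Px c; apply: (conn_ind (Q := fun a => P a -> conn P E y a)) c _ _ Px.
  by move=> _; apply: conn_refl.
move=> a b Eab Pb hb Pa.
exact: conn_trans (hb Pb) (conn_edge (sym _ _ Eab) Pa).
Qed.

End Walks.

Lemma conn_map (V1 V2 : eqType) (P1 : V1 -> Prop) (E1 : V1 -> V1 -> Prop)
    (P2 : V2 -> Prop) (E2 : V2 -> V2 -> Prop) (f : V1 -> V2) (Q : V1 -> Prop) x y :
  conn P1 E1 x y -> Q x -> (forall z, P1 z -> Q z /\ P2 (f z)) ->
  (forall a b, Q a -> Q b -> E1 a b -> E2 (f a) (f b)) ->
  conn P2 E2 (f x) (f y).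
Proof.
move=> c Qx hP hE; move: Qx.
apply: (conn_ind (Q := fun a => Q a -> conn P2 E2 (f a) (f y))) c _ _.
  by move=> _; apply: conn_refl.
move=> a b Eab P1b hb Qa; have [Qb P2b] := hP b P1b.
exact: conn_trans (conn_edge (hE a b Qa Qb Eab) P2b) (hb Qb).
Qed.

Section Acyclic.
Variable V : eqType.
Implicit Types (P : V -> Prop) (E : V -> V -> Prop).

Lemma conn_sub P E P' E' (Q : V -> Prop) x y :
  conn P E x y -> Q x -> (forall z, P z -> Q z /\ P' z) ->
  (forall a b, Q a -> Q b -> E a b -> E' a b) -> conn P' E' x y.
Proof. exact: (conn_map (f := id)). Qed.

Definition without P t z := P z /\ z <> t.

Definition drop_edge E a b x y :=
  E x y /\ ~ ((x = a /\ y = b) \/ (x = b /\ y = a)).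

Lemma drop_edgeC E a b x y : drop_edge E a b x y -> drop_edge E b a x y.
Proof. by case=> Exy hn; split=> // h; apply: hn; tauto. Qed.

Lemma conn_avoid_vertex P E P' a b t x y :
  x <> t -> t = a \/ t = b -> conn P E x y ->
  (forall z, P z -> z <> t /\ P' z) -> conn P' (drop_edge E a b) x y.
Proof.
move=> xt tab c hP; apply: (conn_sub (Q := fun z => z <> t)) c xt hP _.
move=> s r st rt Esr; split=> // -[] [sE rE]; case: tab => tE;
  by [apply: st; rewrite sE | apply: rt; rewrite rE].
Qed.

Lemma conn_last_edge P E x y : P x -> x <> y -> conn P E x y ->
  exists c, [/\ E c y, P c & conn (without P y) E x c].
Proof.
move=> Px xy /conn_uniq [p [h1 h2 h3 h4]].
case/lastP: p h1 h2 h3 h4 => [|q c'] h1 h2 h3 h4; first by case: xy.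
move: h2 h1 h4; rewrite last_rcons => <-; rewrite rcons_path -rcons_cons rcons_uniq.
case/andP=> pq /relbP Ec /andP[cq _]; set c := last x q in Ec.
have Pq z : z \in q -> P z by move=> zq; apply: h3; rewrite mem_rcons inE zq orbT.
exists c; split=> //.
  by have := mem_last x q; rewrite -/c inE => /orP[/eqP->|/Pq].
exists q; split=> //; split=> // z zq; split; first exact: Pq.
by move=> zc'; move: cq; rewrite -zc' inE zq orbT.
Qed.

Definition bridge_acyclic P E :=
  forall a b, P a -> P b -> E a b -> ~ conn P (drop_edge E a b) a b.

Definition tree P E := (exists x, P x) /\ connected P E /\ bridge_acyclic P E.

Section SimpleGraph.
Variables (P : V -> Prop) (E : V -> V -> Prop).
Hypothesis Esym : forall a b, E a b -> E b a.
Hypothesis Eirr : forall a, ~ E a a.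

Lemma conn_drop_edge_sym a b : P b ->
  conn P (drop_edge E b a) b a -> conn P (drop_edge E a b) a b.
Proof.
move=> Pb c; have c' : conn P (drop_edge E b a) a b.
  by apply: conn_sym c => // x y [Exy hn]; split; [apply: Esym | tauto].
apply: (conn_sub (Q := fun _ => True)) c' _ _ _ => // s t _ _.
exact: drop_edgeC.
Qed.

Lemma bridge_acyclic_common_neighbour a a' v :
  bridge_acyclic P E -> P a -> P v -> E a v -> E a' v ->
  conn (without P v) E a a' -> a = a'.
Proof.
move=> hac Pa Pv Eav Ea'v c; have [//|/eqP aa'] := eqVneq a a'.
have [_ a'v] := conn_endP aa' c.
have av : a <> v by move=> h; apply: (Eirr (a := v)); rewrite -{1}h.
case: (hac a v Pa Pv Eav).
apply: conn_trans (conn_avoid_vertex av (or_intror erefl) c _) _ => [z [Pz zv]|] //.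
apply: conn_edge Pv; split=> //; case=> -[h _]; [exact: aa' (esym h) | exact: a'v h].
Qed.

Lemma acyclic_graphE : acyclic_graph P E <-> bridge_acyclic P E.
Proof.
split.
  move=> hac a b Pa Pb Eab /conn_uniq [p [h1 h2 h3 h4]]; apply: hac.
  case: p h1 h2 h3 h4 => [|c [|d q]].
  - by move=> _ /= ab _ _; move: Eab; rewrite -ab => /Eirr.
  - by move=> /andP[/relbP [_ hn] _] /= cb; case: hn; left.
  move=> h1 h2 h3 h4; exists a, [:: c, d & q]; split=> //; split=> //.
  split=> //; split=> //; split; last by move: h2 => /= ->; apply: Esym.
  by apply/walk_path; apply: sub_path h1 => s t /relbP [Est _]; apply/relbP.
(* A cycle [x, c, ..., b] gives the walk [c, ..., b] from [x] to [b], which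
   avoids the edge [x b]. *)
move=> hB [x [p [Px [hp [hu [hs [hw hl]]]]]]].
case: p hp hu hs hw hl => [|c [|d q]] //= hp hu _ hw hl.
set b := last d q in hl.
have Pb : P b by apply: hp; rewrite inE mem_last orbT.
apply: (hB x b Px Pb (Esym hl)).
exists [:: c, d & q]; split; last by split.
move: hu => /= /andP[hx /andP[cdq _]].
move: hx; rewrite inE negb_or => /andP[xc xdq].
rewrite -/(path _ c (d :: q)); apply/andP; split.
  apply/relbP; split; first by case: hw.
  case=> [[_ cb]|[xb _]].
    by move: cdq; rewrite cb /b mem_last.
  by move: xdq; rewrite xb /b mem_last.
have hw' : path (relb E) c (d :: q) by move: hw => [_ hw]; apply/walk_path.
apply: (sub_in_path (P := fun z => z != x)) hw'.
  move=> s t sx tx /relbP Est; apply/relbP; split=> //.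
  by case=> [[/eqP]|[_ /eqP]]; rewrite ?(negbTE sx) ?(negbTE tx).
apply/allP => z; rewrite inE => /orP[/eqP->|zdq]; first by rewrite eq_sym.
by apply/negP => /eqP zx; move: xdq; rewrite -zx zdq.
Qed.

Lemma is_treeE : is_tree P E <-> tree P E.
Proof. by rewrite /is_tree /tree connected_graphE acyclic_graphE. Qed.

End SimpleGraph.
End Acyclic.

Lemma connected_onto (V1 V2 : eqType) (P1 : V1 -> Prop) (E1 : V1 -> V1 -> Prop)
    (P2 : V2 -> Prop) (E2 : V2 -> V2 -> Prop) (f : V1 -> V2) :
  (forall z, P1 z -> P2 (f z)) ->
  (forall a b, P1 a -> P1 b -> E1 a b -> E2 (f a) (f b)) ->
  (forall z, P2 z -> exists2 z1, P1 z1 & f z1 = z) ->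
  connected P1 E1 -> connected P2 E2.
Proof.
move=> hP hE onto hc x y /onto [x1 P1x <-] /onto [y1 P1y <-].
apply: (conn_map (f := f) (Q := P1)) (hc _ _ P1x P1y) _ _ _ => // z P1z.
by split; last exact: hP.
Qed.

Lemma bridge_acyclic_inj (V1 V2 : eqType) (P1 : V1 -> Prop) (E1 : V1 -> V1 -> Prop)
    (P2 : V2 -> Prop) (E2 : V2 -> V2 -> Prop) (g : V1 -> V2) :
  (forall z, P1 z -> P2 (g z)) ->
  (forall a b, P1 a -> P1 b -> E1 a b -> E2 (g a) (g b)) ->
  (forall a b, P1 a -> P1 b -> g a = g b -> a = b) ->
  bridge_acyclic P2 E2 -> bridge_acyclic P1 E1.
Proof.
move=> hP hE inj hac a b Pa Pb Eab c.
apply: (hac (g a) (g b) (hP _ Pa) (hP _ Pb) (hE _ _ Pa Pb Eab)).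
apply: (conn_map (f := g) (Q := P1)) c _ _ _ => // [z Pz|s t Ps Pt [Est hn]].
  by split; last exact: hP.
split; first exact: hE.
by case=> [[/inj h1 /inj h2]|[/inj h1 /inj h2]]; apply: hn; [left|right]; split;
  [apply: h1 | apply: h2 | apply: h1 | apply: h2].
Qed.

Lemma tree_transfer (V1 V2 : eqType) (P1 : V1 -> Prop) (E1 : V1 -> V1 -> Prop)
    (P2 : V2 -> Prop) (E2 : V2 -> V2 -> Prop) (f : V1 -> V2) (g : V2 -> V1) :
  (forall z, P1 z -> P2 (f z)) ->
  (forall a b, P1 a -> P1 b -> E1 a b -> E2 (f a) (f b)) ->
  (forall z, P2 z -> exists2 z1, P1 z1 & f z1 = z) ->
  (forall z, P2 z -> P1 (g z)) ->
  (forall a b, P2 a -> P2 b -> E2 a b -> E1 (g a) (g b)) ->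
  (forall a b, P2 a -> P2 b -> g a = g b -> a = b) ->
  tree P1 E1 -> tree P2 E2.
Proof.
move=> fP fE onto gP gE inj [[x Px] [hc hac]]; split; first by exists (f x); apply: fP.
split; first exact: connected_onto fP fE onto hc.
exact: bridge_acyclic_inj gP gE inj hac.
Qed.

Section Bipartite.
Variables U W : eqType.

Definition biprel (e : U -> W -> Prop) (z1 z2 : U + W) : Prop :=
  match z1, z2 with
  | inl u, inr v => e u v
  | inr v, inl u => e u v
  | _, _ => False
  end.

Definition sumpred (PL : U -> Prop) (PR : W -> Prop) (z : U + W) : Prop :=
  match z with inl u => PL u | inr v => PR v end.

Lemma biprel_sym e a b : biprel e a b -> biprel e b a.
Proof. by case: a => ?; case: b => ?. Qed.

Lemma biprel_irr e a : ~ biprel e a a.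
Proof. by case: a => ? h. Qed.

End Bipartite.

Lemma inl_inr_neq (U W : Type) (u : U) (w : W) : inl u <> inr w.
Proof. by []. Qed.

(* The bipartite graph [G'] refines [G]: the right vertex [v] of [G] is blown
   up into the right vertices [x] of [G'] with [pi x = v]. *)
Section Glue.
Variables U V W : eqType.
Variables (PL : U -> Prop) (PR : V -> Prop) (e : U -> V -> Prop).
Variables (PR' : W -> Prop) (e' : U -> W -> Prop) (pi : W -> V).
Hypothesis e_vertices : forall u v, e u v -> PL u /\ PR v.
Hypothesis e'_vertices : forall u x, e' u x -> PL u /\ PR' x /\ e u (pi x).
Hypothesis piP : forall x, PR' x -> PR (pi x).
Hypothesis pi_onto : forall v, PR v -> exists2 x, PR' x & pi x = v.

Local Notation G := (sumpred PL PR).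
Local Notation G' := (sumpred PL PR').

Definition fiber v (z : U + W) : Prop :=
  match z with inl u => PL u /\ e u v | inr x => PR' x /\ pi x = v end.

Definition off_fiber v (z : U + W) : Prop :=
  G' z /\ forall x, z = inr x -> pi x <> v.

Definition collapse (z : U + W) : U + V :=
  match z with inl u => inl u | inr x => inr (pi x) end.

Lemma fiber_vertex v z : fiber v z -> G' z.
Proof. by case: z => ? /= []. Qed.

Lemma conn_fiber v y z : conn (fiber v) (biprel e') y z -> conn G' (biprel e') y z.
Proof.
by move=> c; apply: (conn_sub (Q := fun _ => True)) c _ _ _ => // z' /fiber_vertex.
Qed.

Lemma collapseP z : G' z -> G (collapse z).
Proof. by case: z => //= x /piP. Qed.

Lemma glue_connected : connected G (biprel e) ->
  (forall v, PR v -> connected (fiber v) (biprel e')) -> connected G' (biprel e').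
Proof.
move=> hG hT a b Pa Pb.
have same_fiber z' : G' z' -> collapse z' = collapse a -> conn G' (biprel e') a z'.
  case: a Pa => [u|x] Pa; case: z' => [u'|x'] Pz' //= [eqa].
    by rewrite eqa; apply: conn_refl.
  by apply/conn_fiber/(hT (pi x) (piP Pa)) => /=.
pose Q z := forall z', G' z' -> collapse z' = z -> conn G' (biprel e') a z'.
suff : Q (collapse b) by apply.
apply: (conn_ind (Q := Q)) (hG _ _ (collapseP Pb) (collapseP Pa)) same_fiber _.
case=> [u|v] [u'|v'] //= huv Pb' Qb [u2|x2] //= Pz' [eqz].
  rewrite eqz; have [x PRx pix] := pi_onto (e_vertices huv).2.
  apply: conn_trans (Qb (inr x) PRx _) _; first by rewrite /= pix.
  apply/conn_fiber/(hT v' (e_vertices huv).2) => /=; first by split.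
  by split=> //; case: (e_vertices huv).
apply: conn_trans (Qb (inl u') Pb' erefl) _.
by apply/conn_fiber/(hT v (e_vertices huv).2).
Qed.

Lemma glue_down_connected : connected G' (biprel e') -> connected G (biprel e).
Proof.
apply: (connected_onto (f := collapse)); first exact: collapseP.
  by case=> [u|x] [u'|x'] //= _ _ /e'_vertices [_ []].
case=> [u|v] /=; first by exists (inl u).
by case/pi_onto=> x PRx pix; exists (inr x); rewrite /= ?pix.
Qed.

Section Excursion.
Variables (u0 : U) (x0 : W).
Hypothesis Gacyclic : bridge_acyclic G (biprel e).
Local Notation v0 := (pi x0).
Local Notation E0 := (drop_edge (biprel e') (inl u0) (inr x0)).

(* A walk of [G'] leaving the fiber over [v0] from a left vertex [u] can only
   return to the fiber at [u] itself: otherwise its collapse would close a cycle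
   through [v0] in [G]. *)
Lemma fiber_excursion y : conn G' E0 y (inr x0) -> G' y ->
  (fiber v0 y -> conn (fiber v0) E0 y (inr x0)) /\
  (off_fiber v0 y -> forall u, e u v0 ->
     conn (without G (inr v0)) (biprel e) (inl u) (collapse y) ->
     conn (fiber v0) E0 (inl u) (inr x0)).
Proof.
move=> c; apply: (conn_ind (Q := fun y => G' y -> _)) c _ _.
  by move=> _; split=> [_|[_ /(_ x0 erefl)]] //; apply: conn_refl.
case=> [u|x] [u'|x'] [hb hn] Pb Qb _ //=; have [in_fiber off] := Qb Pb.
  have [_ [_ eux]] := e'_vertices hb.
  have enter : pi x' = v0 -> conn (fiber v0) E0 (inl u) (inr x0).
    by move=> px'; apply: conn_trans (in_fiber _); [apply: conn_edge | split].
  have leave : pi x' <> v0 -> forall u1, e u1 v0 ->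
      conn (without G (inr v0)) (biprel e) (inl u1) (inl u) ->
      conn (fiber v0) E0 (inl u1) (inr x0).
    move=> px' u1 eu1 c1; apply: off => //; first by split=> // x [<-].
    by apply: conn_trans c1 (conn_edge _ _) => //=; split; [apply: piP | case].
  split=> [[_ euv]|_ u1 eu1 c1]; case: (eqVneq (pi x') v0) => [px'|/eqP px'].
  - exact: enter.
  - exact: leave euv (conn_refl _ _ _).
  - suff -> : u1 = u by apply: enter.
    have [PLu1 PRv0] := e_vertices eu1.
    suff [] : inl u1 = inl u :> U + V by [].
    apply: (bridge_acyclic_common_neighbour (@biprel_irr _ _ e) Gacyclic) c1 => //.
    by rewrite /= -px'.
  - exact: leave eu1 c1.
have [_ [_ eux]] := e'_vertices hb.
split=> [[PRx pxv]|_ u1 eu1 c1].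
  apply: conn_trans (in_fiber _) => //; last by split=> //; rewrite -pxv.
  by apply: conn_edge; split=> //; rewrite -pxv.
apply: (off _ u1 eu1); first by split.
by apply: conn_trans c1 (conn_edge _ _) => //=; split.
Qed.

End Excursion.

Lemma glue_acyclic : bridge_acyclic G (biprel e) ->
  (forall v, PR v -> bridge_acyclic (fiber v) (biprel e')) ->
  bridge_acyclic G' (biprel e').
Proof.
move=> hac hT.
suff edge_case u0 x0 : PL u0 -> PR' x0 -> e' u0 x0 ->
    ~ conn G' (drop_edge (biprel e') (inl u0) (inr x0)) (inl u0) (inr x0).
  case=> [u0|x0] [u1|x1] //= Pa Pb hab c; first exact: edge_case Pa Pb hab c.
  by apply: (edge_case u1 x0 Pb Pa hab); apply: conn_drop_edge_sym c => //; apply: biprel_sym.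
move=> PLu0 PRx0 hux c; have [_ [_ eux]] := e'_vertices hux.
have [in_fiber _] := fiber_excursion hac c PLu0.
exact: (hT (pi x0) (piP PRx0) (inl u0) (inr x0)) (in_fiber _).
Qed.

Lemma lift_off_fiber v0 u0 u : (forall v, PR v -> connected (fiber v) (biprel e')) ->
  conn (without G (inr v0)) (biprel e) (inl u0) (inl u) ->
  conn (off_fiber v0) (biprel e') (inl u0) (inl u).
Proof.
move=> hT c.
pose Q z := match z with
  | inl u' => conn (off_fiber v0) (biprel e') (inl u') (inl u)
  | inr v => v <> v0 -> forall u', e u' v -> conn (off_fiber v0) (biprel e') (inl u') (inl u)
  end.
apply: (conn_ind (Q := Q)) c (conn_refl _ _ _) _.
case=> [u1|v] [u2|v'] //= huv [Pb nb] Qb; first by apply: Qb huv => vv; apply: nb; rewrite vv.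
move=> vv0 u' eu'; apply: conn_trans Qb.
have [[PLu' PRv] [PLu2 _]] := (e_vertices eu', e_vertices huv).
apply: (conn_sub (Q := fun _ => True)) (hT v PRv (inl u') (inl u2) _ _) _ _ _ => //.
move=> z /[dup] /fiber_vertex Gz; case: z Gz => [u3|x3] Gz /= [_ pz].
  by split=> //; split.
by split=> //; split=> // x [<-]; rewrite pz.
Qed.

Lemma glue_down_acyclic : bridge_acyclic G' (biprel e') ->
  (forall v, PR v -> connected (fiber v) (biprel e')) -> bridge_acyclic G (biprel e).
Proof.
move=> hac hT.
suff edge_case u0 v0 : e u0 v0 ->
    ~ conn G (drop_edge (biprel e) (inl u0) (inr v0)) (inl u0) (inr v0).
  case=> [u0|v0] [u1|v1] //= Pa Pb hab c; first exact: edge_case hab c.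
  by apply: (edge_case u1 v0 hab); apply: conn_drop_edge_sym c => //; apply: biprel_sym.
(* The bypass ends with an edge [u1 v0] with [u1 <> u0]; its lift to [G'] avoids
   the fiber over [v0], and a walk in that fiber from [u1] back to [u0] closes a
   cycle through an edge [u0 x] of [G']. *)
move=> huv c; have [PLu0 PRv0] := e_vertices huv.
have [[u1|v1] [Ec _ c1]] := conn_last_edge (PLu0 : G (inl u0)) (@inl_inr_neq _ _ _ _) c;
  last by case: Ec.
case: Ec => /= eu1 u1u0.
have ne : inl u1 <> inl u0 :> U + W by case=> h; apply: u1u0; left; rewrite h.
have lift : conn (off_fiber v0) (biprel e') (inl u0) (inl u1).
  apply: lift_off_fiber hT _.
  by apply: (conn_sub (Q := fun _ => True)) c1 _ _ _ => // a b _ _ [].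
have [PLu1 _] := e_vertices eu1.
have Fu0 : fiber v0 (inl u0) by split.
have Fu1 : fiber v0 (inl u1) by split.
have [[u2|x] [hx [PRx px] c2]] := conn_last_edge Fu1 ne (hT v0 PRv0 _ _ Fu1 Fu0).
  by case: hx.
apply: (hac (inl u0) (inr x) PLu0 PRx hx).
apply: (conn_trans (y := inl u1)).
  apply: (conn_avoid_vertex (@inl_inr_neq _ _ _ _) (or_intror erefl) lift).
  by move=> z [Gz offz]; split=> // zx; apply: (offz x zx).
apply: (conn_avoid_vertex ne (or_introl erefl) c2).
by move=> z [/fiber_vertex Gz zu0].
Qed.

Lemma glue_tree : tree G (biprel e) ->
  (forall v, PR v -> tree (fiber v) (biprel e')) -> tree G' (biprel e').
Proof.
move=> [[z Gz] [hc hac]] hT; split.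
  case: z Gz => [u|v] Gz; first by exists (inl u).
  by have [x PRx _] := pi_onto Gz; exists (inr x).
split; first by apply: glue_connected => // v /hT [_ []].
by apply: glue_acyclic => // v /hT [_ []].
Qed.

Lemma glue_tree_down : tree G' (biprel e') ->
  (forall v, PR v -> connected (fiber v) (biprel e')) -> tree G (biprel e).
Proof.
move=> [[z Gz] [hc hac]] hT; split; first by exists (collapse z); apply: collapseP.
by split; [apply: glue_down_connected | apply: glue_down_acyclic].
Qed.

End Glue.

Section Language.
Variable A : finType.
Implicit Types (X : config A -> Prop) (x : config A).

Lemma size_factor_at x i n : size (factor_at x i n) = n.
Proof. by rewrite /factor_at size_map size_iota. Qed.

Lemma factor_at_cat x i a b :
  factor_at x i (a + b) = factor_at x i a ++ factor_at x (i + a%:Z)%R b.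
Proof.
rewrite /factor_at iotaD map_cat; congr (_ ++ _).
have -> : iota (0 + a) b = map (addn a) (iota 0 b) by rewrite -iotaDl addn0.
by rewrite -map_comp; apply: eq_map => j /=; rewrite PoszD addrA.
Qed.

Lemma lang_infix X s t r : lang X (s ++ t ++ r) -> lang X t.
Proof.
case=> x [Xx [i h]]; exists x; split=> //; exists (i + (size s)%:Z)%R.
move: h; rewrite !size_cat !factor_at_cat => /(congr1 (drop (size s))).
rewrite !drop_size_cat ?size_factor_at // => /(congr1 (take (size t))).
by rewrite !take_size_cat ?size_factor_at.
Qed.

Lemma lang_prefix X s t : lang X (s ++ t) -> lang X s.
Proof. exact: (@lang_infix X [::] s t). Qed.

Lemma lang_suffix X s t : lang X (s ++ t) -> lang X t.
Proof. by move=> h; apply: (@lang_infix X s t [::]); rewrite cats0. Qed.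

Lemma lang_extend X s j : lang X s -> exists2 b, size b = j & lang X (s ++ b).
Proof.
case=> x [Xx [i h]]; exists (factor_at x (i + (size s)%:Z)%R j).
  exact: size_factor_at.
by exists x; split=> //; exists i; rewrite size_cat size_factor_at factor_at_cat -h.
Qed.

Lemma rev_map_iota0 (T : Type) (f : nat -> T) n :
  rev (map f (iota 0 n)) = map (fun j => f (n.-1 - j)) (iota 0 n).
Proof.
elim: n => [|n IH] //.
rewrite [in LHS](_ : iota 0 n.+1 = iota 0 n ++ [:: n]); last by rewrite -addn1 iotaD.
rewrite map_cat rev_cat IH /= subn0; congr (_ :: _).
have -> : iota 1 n = map (addn 1) (iota 0 n) by rewrite -iotaDl addn0.
by rewrite -map_comp; apply: eq_map => j /=; congr f; lia.
Qed.

Lemma factor_at_rev x i n :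
  rev (factor_at x i n) = factor_at (fun j => x (- j)%R) (- (i + (n.-1)%:Z))%R n.
Proof.
rewrite /factor_at rev_map_iota0; apply/eq_in_map => j.
rewrite mem_iota add0n => /andP[_ jn]; congr x; lia.
Qed.

End Language.

Section ExtensionGraphs.
Variable A : finType.
Implicit Types (X : config A -> Prop) (w u v x b : seq A).

Definition extE X k l w u v := Lext X k w u /\ Rext X l w v /\ lang X (u ++ w ++ v).

Definition ext_tree X k l w :=
  tree (sumpred (Lext X k w) (Rext X l w)) (biprel (extE X k l w)).

Lemma ext_graph_is_treeE X n w : ext_graph_is_tree X n w <-> ext_tree X n n w.
Proof. exact: is_treeE (@biprel_sym _ _ _) (@biprel_irr _ _ _). Qed.

Lemma Rext_take X j l w x : j <= l -> Rext X l w x -> Rext X j w (take j x).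
Proof.
move=> jl [sx [lx lwx]]; split; first by rewrite size_takel // sx.
split; apply: (@lang_prefix _ X _ (drop j x)); first by rewrite cat_take_drop.
by rewrite -catA cat_take_drop.
Qed.

Lemma Rext_extend X j d w v :
  Rext X j w v -> exists2 x, Rext X (j + d) w x & take j x = v.
Proof.
case=> [sv [lv lwv]]; have [b sb lb] := lang_extend d lwv.
exists (v ++ b); last by rewrite take_size_cat.
split; first by rewrite size_cat sv sb.
by split; [apply: (@lang_suffix _ X w); rewrite catA | rewrite catA].
Qed.

Lemma extE_take X k j l w u x : j <= l -> extE X k l w u x -> extE X k j w u (take j x).
Proof.
move=> jl [Lu [Rx h]]; split=> //; split; first exact: Rext_take Rx.
by apply: (@lang_prefix _ X _ (drop j x)); rewrite -!catA cat_take_drop.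
Qed.

Section Refinement.
Variables (X : config A -> Prop) (k l : nat) (w : seq A).

Lemma extE_vertices u v : extE X k l w u v -> Lext X k w u /\ Rext X l w v.
Proof. by case=> [Lu [Rv _]]. Qed.

Lemma extE_succ_vertices u x : extE X k l.+1 w u x ->
  Lext X k w u /\ Rext X l.+1 w x /\ extE X k l w u (take l x).
Proof. by move=> h; case: (h) => [Lu [Rx _]]; do 2!split=> //; apply: extE_take h. Qed.

Lemma Rext_take_succ x : Rext X l.+1 w x -> Rext X l w (take l x).
Proof. exact: Rext_take. Qed.

Lemma Rext_take_onto v : Rext X l w v -> exists2 x, Rext X l.+1 w x & take l x = v.
Proof. by move=> h; have := Rext_extend 1 h; rewrite addn1. Qed.

(* The fiber of [E_{k,l+1}(w)] over the right vertex [v] of [E_{k,l}(w)] is a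
   copy of [E_{k,1}(wv)]. *)
Variable v : seq A.
Hypothesis Rv : Rext X l w v.

Local Notation fiber_v := (fiber (Lext X k w) (extE X k l w) (Rext X l.+1 w) (take l) v).
Local Notation Gwv := (sumpred (Lext X k (w ++ v)) (Rext X 1 (w ++ v))).

Lemma Lext_catr_inv u : Lext X k (w ++ v) u -> Lext X k w u /\ extE X k l w u v.
Proof.
case=> [su [lu luwv]]; have Lu : Lext X k w u.
  by split=> //; split=> //; apply: (@lang_prefix _ X _ v); rewrite -catA.
by split=> //; split.
Qed.

Lemma Lext_catr u : Lext X k w u -> extE X k l w u v -> Lext X k (w ++ v) u.
Proof. by case=> [su [lu _]] [_ [_ h]]; split=> //; split. Qed.

Lemma Rext_cat1 b : Rext X 1 (w ++ v) b -> Rext X l.+1 w (v ++ b) /\ take l (v ++ b) = v.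
Proof.
case: Rv => [sv _] [sb [lb lwvb]]; split; last by rewrite take_size_cat.
split; first by rewrite size_cat sv sb addn1.
by split; [apply: (@lang_suffix _ X w); rewrite catA | rewrite catA].
Qed.

Lemma Rext_drop x : Rext X l.+1 w x -> take l x = v -> Rext X 1 (w ++ v) (drop l x).
Proof.
case=> [sx [lx lwx]] tx; split; first by rewrite size_drop sx subSnn.
split; first by apply: (@lang_suffix _ X (take l x)); rewrite cat_take_drop.
by rewrite -tx -catA cat_take_drop.
Qed.

Lemma extE_cat1 u b : extE X k 1 (w ++ v) u b -> extE X k l.+1 w u (v ++ b).
Proof.
case=> [Lu [Rb h]]; have [[Lu' _] [Rvb _]] := (Lext_catr_inv Lu, Rext_cat1 Rb).
by split=> //; split=> //; move: h; rewrite !catA.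
Qed.

Lemma extE_drop u x : extE X k l.+1 w u x -> take l x = v ->
  extE X k 1 (w ++ v) u (drop l x).
Proof.
case=> [Lu [Rx h]] tx; have xE : x = v ++ drop l x by rewrite -tx cat_take_drop.
split.
  case: (Lu) => [su [lu _]]; split=> //; split=> //.
  by apply: (@lang_prefix _ X _ (drop l x)); move: h; rewrite {1}xE !catA.
by split; [apply: Rext_drop | move: h; rewrite {1}xE !catA].
Qed.

Definition attach (z : seq A + seq A) : seq A + seq A :=
  match z with inl u => inl u | inr b => inr (v ++ b) end.

Definition detach (z : seq A + seq A) : seq A + seq A :=
  match z with inl u => inl u | inr x => inr (drop l x) end.

Lemma fiber_connected :
  connected Gwv (biprel (extE X k 1 (w ++ v))) ->
  connected fiber_v (biprel (extE X k l.+1 w)).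
Proof.
apply: (connected_onto (f := attach)).
- by case=> [u|b] /=; [move/Lext_catr_inv | move/Rext_cat1].
- by case=> [u|b] [u'|b'] //= _ _ /extE_cat1.
case=> [u|x] /= [h1 h2]; first by exists (inl u); last by []; apply: Lext_catr.
exists (inr (drop l x)); first exact: Rext_drop.
by rewrite /= -h2 cat_take_drop.
Qed.

Lemma fiber_tree :
  tree Gwv (biprel (extE X k 1 (w ++ v))) -> tree fiber_v (biprel (extE X k l.+1 w)).
Proof.
move=> [[z Gz] [hc hac]]; split.
  by exists (attach z); case: z Gz => [u|b] /=; [move/Lext_catr_inv | move/Rext_cat1].
split; first exact: fiber_connected.
apply: (bridge_acyclic_inj (g := detach)) hac.
- by case=> [u|x] /= [h1 h2]; [apply: Lext_catr | apply: Rext_drop].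
- by case=> [u|x] [u'|x'] //= Pa Pb h; apply: (extE_drop h); [case: Pb | case: Pa].
case=> [u|x] [u'|x'] //= [_ tx] [_ tx'] [eqd].
by rewrite -(cat_take_drop l x) -(cat_take_drop l x') tx tx' eqd.
Qed.

End Refinement.

Lemma ext_connected_take1 X k l x :
  connected (sumpred (Lext X k x) (Rext X l.+1 x)) (biprel (extE X k l.+1 x)) ->
  connected (sumpred (Lext X k x) (Rext X 1 x)) (biprel (extE X k 1 x)).
Proof.
apply: (connected_onto (f := fun z => if z is inr y then inr (take 1 y) else z)).
- by case=> [u|y] //= Ry; apply: Rext_take Ry.
- by case=> [u|y] [u'|y'] //= _ _ h; apply: extE_take h.
case=> [u|b] /= h; first by exists (inl u).
by have [y Ry ty] := Rext_extend l h; exists (inr y); rewrite /= ?ty.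
Qed.

Definition ext_trees X m k l :=
  forall w, lang X w -> m <= size w -> ext_tree X k l w.

Lemma ext_trees_succr X m k l :
  ext_trees X m k l -> ext_trees X m k 1 -> ext_trees X m k l.+1.
Proof.
move=> h h1 w Lw mw.
apply: (glue_tree (@extE_vertices X k l w) (@extE_succ_vertices X k l w)
          (@Rext_take_succ X l w) (@Rext_take_onto X l w) (h w Lw mw)) => v Rv.
have [_ [_ Lwv]] := Rv.
have mwv : m <= size (w ++ v) by rewrite size_cat (leq_trans mw) ?leq_addr.
exact: fiber_tree Rv (h1 _ Lwv mwv).
Qed.

Lemma ext_trees_predr X m k l : ext_trees X m k l.+1 -> ext_trees X m k l.
Proof.
move=> h w Lw mw.
apply: (glue_tree_down (@extE_vertices X k l w) (@extE_succ_vertices X k l w)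
          (@Rext_take_succ X l w) (@Rext_take_onto X l w) (h w Lw mw)) => v Rv.
have [_ [_ Lwv]] := Rv.
have mwv : m <= size (w ++ v) by rewrite size_cat (leq_trans mw) ?leq_addr.
have [_ [hc _]] := h (w ++ v) Lwv mwv.
exact: fiber_connected Rv (ext_connected_take1 hc).
Qed.

End ExtensionGraphs.

Section Mirror.
Variable A : finType.
Implicit Types (X : config A -> Prop) (w u v s : seq A).

Definition mirror X : config A -> Prop := fun x => X (fun i => x (- i)%R).

Lemma config_oppK (x : config A) : (fun i => x (- - i)%R) = x.
Proof. by apply: functional_extensionality => i; rewrite opprK. Qed.

Lemma mirrorK : involutive mirror.
Proof. by move=> X; apply: functional_extensionality => x; rewrite /mirror config_oppK. Qed.

Lemma lang_mirror X s : lang (mirror X) s <-> lang X (rev s).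
Proof.
split=> -[x [Xx [i h]]]; exists (fun j => x (- j)%R); split.
- exact: Xx.
- by exists (- (i + ((size s).-1)%:Z))%R; rewrite size_rev {1}h factor_at_rev.
- by rewrite /mirror config_oppK.
by exists (- (i + ((size s).-1)%:Z))%R; rewrite -[s in LHS]revK h size_rev factor_at_rev.
Qed.

Lemma lang_mirror_rev X s : lang (mirror X) (rev s) <-> lang X s.
Proof. by rewrite lang_mirror revK. Qed.

Lemma Lext_mirror X k w u : Lext X k w u <-> Rext (mirror X) k (rev w) (rev u).
Proof. by rewrite /Lext /Rext size_rev -rev_cat !lang_mirror_rev. Qed.

Lemma Rext_mirror X l w v : Rext X l w v <-> Lext (mirror X) l (rev w) (rev v).
Proof. by rewrite /Lext /Rext size_rev -rev_cat !lang_mirror_rev. Qed.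

Lemma extE_mirror X k l w u v :
  extE X k l w u v <-> extE (mirror X) l k (rev w) (rev v) (rev u).
Proof.
rewrite /extE (_ : rev v ++ rev w ++ rev u = rev (u ++ w ++ v)); last by rewrite !rev_cat catA.
split=> -[h1 [h2 h3]].
  by split; [apply/Rext_mirror | split; [apply/Lext_mirror | apply/lang_mirror_rev]].
by split; [apply/Lext_mirror | split; [apply/Rext_mirror | apply/lang_mirror_rev]].
Qed.

Definition flip (z : seq A + seq A) : seq A + seq A :=
  match z with inl u => inr (rev u) | inr v => inl (rev v) end.

Lemma flipK : involutive flip.
Proof. by case=> s /=; rewrite revK. Qed.

Lemma ext_tree_mirror X k l w : ext_tree X k l w -> ext_tree (mirror X) l k (rev w).
Proof.
have fP z : sumpred (Lext X k w) (Rext X l w) z ->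
    sumpred (Lext (mirror X) l (rev w)) (Rext (mirror X) k (rev w)) (flip z).
  by case: z => s /=; [move/Lext_mirror | move/Rext_mirror].
have gP z : sumpred (Lext (mirror X) l (rev w)) (Rext (mirror X) k (rev w)) z ->
    sumpred (Lext X k w) (Rext X l w) (flip z).
  by case: z => s /= h; [apply/Rext_mirror | apply/Lext_mirror]; rewrite revK.
apply: (tree_transfer (f := flip) (g := flip)) => //.
- by case=> a [] b //= _ _ /extE_mirror.
- by move=> z /gP; exists (flip z); rewrite ?flipK.
- by case=> a [] b //= _ _ h; apply/extE_mirror; rewrite !revK.
- by move=> a b _ _ /(can_inj flipK).
Qed.

Lemma ext_trees_mirror X m k l : ext_trees X m k l -> ext_trees (mirror X) m l k.
Proof.
move=> h w /lang_mirror Lw mw; rewrite -[w]revK; apply: ext_tree_mirror; apply: h => //.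
by rewrite size_rev.
Qed.

Lemma ext_trees_unmirror X m k l : ext_trees (mirror X) m l k -> ext_trees X m k l.
Proof. by rewrite -{2}(mirrorK X); apply: ext_trees_mirror. Qed.

Lemma ext_trees_succl X m k l :
  ext_trees X m k l -> ext_trees X m 1 l -> ext_trees X m k.+1 l.
Proof.
move=> h h1; apply: ext_trees_unmirror.
by apply: ext_trees_succr; apply: ext_trees_mirror.
Qed.

Lemma ext_trees_predl X m k l : ext_trees X m k.+1 l -> ext_trees X m k l.
Proof. by move=> h; apply/ext_trees_unmirror/ext_trees_predr/ext_trees_mirror. Qed.

Lemma ext_trees_11 X m k l : ext_trees X m k.+1 l.+1 -> ext_trees X m 1 1.
Proof.
move=> h; have {h} : ext_trees X m k.+1 1 by elim: l h => [|l IH] // /ext_trees_predr.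
by elim: k => [|k IH] // /ext_trees_predl.
Qed.

Lemma ext_trees_of_11 X m k l : ext_trees X m 1 1 -> ext_trees X m k.+1 l.+1.
Proof.
move=> h11; have h1 d : ext_trees X m 1 d.+1 by elim: d => [|d IH] //; apply: ext_trees_succr.
by elim: k => [|k IH]; [apply: h1 | apply: ext_trees_succl].
Qed.

End Mirror.

Theorem mainTheorem16 (A : finType) (X : config A -> Prop) (n m : nat) :
  shift_space X -> 1 <= n ->
  ((forall w : seq A, lang X w -> m <= size w -> ext_graph_is_tree X n w) <->
   (forall w : seq A, lang X w -> m <= size w -> ext_graph_is_tree X n.+1 w)).
Proof.
move=> _; case: n => // n _.
have ext_treesE j : (forall w, lang X w -> m <= size w -> ext_graph_is_tree X j w) <->
    ext_trees X m j j.
  by split=> h w Lw mw; apply/ext_graph_is_treeE/h.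
rewrite !ext_treesE; split=> /ext_trees_11 h11; exact: ext_trees_of_11.
Qed.
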